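(* Let $\mathfrak{g}$ be a finite-dimensional supersolvable Lie algebra over a field $\mathbb{F}$, and let $M$ be a finite-dimensional irreducible Leibniz $\mathfrak{g}$-bimodule such that $\dim_{\mathbb{F}}M\ne 1$. Then $\mathrm{HL}^n(\mathfrak{g},M)=0$ for every positive integer $n$. Moreover, if $M$ is symmetric, then $\mathrm{HL}^n(\mathfrak{g},M)=0$ for every non-negative integer $n$.
   Context: A Lie algebra $\mathfrak{g}$ is supersolvable if there is a chain of ideals $0=\mathfrak{g}_0\subset\mathfrak{g}_1\subset\cdots\subset\mathfrak{g}_n=\mathfrak{g}$ with $\dim\mathfrak{g}_j/\mathfrak{g}_{j-1}=1$. $\mathfrak{g}$ is regarded as a left Leibniz algebra with $xy=[x,y]$. A Leibniz $\mathfrak{g}$-bimodule is a vector space $M$ with bilinear actions $x\cdot m$, $m\cdot x$ satisfying $(xy)\cdot m=x\cdot(y\cdot m)-y\cdot(x\cdot m)$, $(x\cdot m)\cdot y=x\cdot(m\cdot y)-m\cdot(xy)$, $(m\cdot x)\cdot y=m\cdot(xy)-x\cdot(m\cdot y)$; it is irreducible if nonzero with no sub-bimodules other than $0$ and $M$; symmetric if $m\cdot x=-x\cdot m$. $\mathrm{HL}^n(\mathfrak{g},M)$ is the cohomology of $\mathrm{Hom}(\mathfrak{g}^{\otimes n},M)$ with $(\mathrm{d}^nf)(x_1,\dots,x_{n+1})=\sum_{i=1}^n(-1)^{i+1}x_i\cdot f(\dots,\hat{x}_i,\dots)+(-1)^{n+1}f(x_1,\dots,x_n)\cdot x_{n+1}+\sum_{i<j}(-1)^if(x_1,\dots,\hat{x}_i,\dots,x_ix_j,\dots,x_{n+1})$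 ($x_ix_j$ in the $j$-th position). *)

From HB Require Import structures.
From mathcomp Require Import all_boot all_order all_algebra.
Set Implicit Arguments. Unset Strict Implicit. Unset Printing Implicit Defensive.
Import Order.TTheory GRing.Theory Num.Theory.
Local Open Scope ring_scope.

Definition is_lie_bracket (F : fieldType) (V : vectType F) (br : V -> V -> V) :=
  [/\ forall x, linear (br x),
      forall y, linear (br ^~ y),
      forall x, br x x = 0
    & forall x y z, br x (br y z) + br y (br z x) + br z (br x y) = 0].

(* ideal of a Lie algebra (left = two-sided, by antisymmetry) *)
Definition lie_ideal (F : fieldType) (V : vectType F) (br : V -> V -> V)
  (I : {vspace V}) := forall x y, y \in I -> br x y \in I.

Definition supersolvable (F : fieldType) (V : vectType F) (br : V -> V -> V) :=
  exists (n : nat) (G : nat -> {vspace V}),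
    [/\ G 0%N = 0%VS, G n = fullv,
        forall j, (j < n)%N -> (G j <= G j.+1)%VS /\ \dim (G j.+1) = (\dim (G j)).+1
      & forall j, (j <= n)%N -> lie_ideal br (G j)].

(* Leibniz bimodule over the Lie algebra (V, br) regarded as a left Leibniz algebra *)
Definition is_leibniz_bimodule (F : fieldType) (V : vectType F) (M : vectType F)
  (br : V -> V -> V) (la : V -> M -> M) (ra : M -> V -> M) :=
  [/\ (forall x, linear (la x)) /\ (forall m, linear (la ^~ m)),
      (forall m, linear (ra m)) /\ (forall x, linear (ra ^~ x)),
      forall x y m, la (br x y) m = la x (la y m) - la y (la x m),
      forall x y m, ra (la x m) y = la x (ra m y) - ra m (br x y)
    & forall x y m, ra (ra m x) y = ra m (br x y) - la x (ra m y)].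

Definition sub_bimodule (F : fieldType) (V : vectType F) (M : vectType F)
  (la : V -> M -> M) (ra : M -> V -> M) (U : {vspace M}) :=
  forall x m, m \in U -> (la x m \in U) && (ra m x \in U).

Definition irreducible_bimodule (F : fieldType) (V : vectType F) (M : vectType F)
  (la : V -> M -> M) (ra : M -> V -> M) :=
  (\dim {: M} != 0)%N /\
  forall U : {vspace M}, sub_bimodule la ra U -> U = 0%VS \/ U = fullv.

Definition symmetric_bimodule (F : fieldType) (V : vectType F) (M : vectType F)
  (la : V -> M -> M) (ra : M -> V -> M) :=
  forall x m, ra m x = - la x m.

(* n-cochains: maps from n-tuples (finite functions 'I_n -> V) to M,
   multilinear = linear in each argument (i.e. elements of Hom(g^{(x)n}, M)). *)
Definition upd (V : Type) (n : nat) (x : {ffun 'I_n -> V}) (i : 'I_n) (v : V) :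
  {ffun 'I_n -> V} := [ffun j => if j == i then v else x j].

Definition multilinear (F : fieldType) (V : vectType F) (M : vectType F) (n : nat)
  (f : {ffun 'I_n -> V} -> M) :=
  forall (i : 'I_n) (x : {ffun 'I_n -> V}), linear (fun v => f (upd x i v)).

(* The Leibniz coboundary d^n : C^n -> C^(n+1), indices shifted to 0-based:
   (d f)(x_0..x_n) = sum_{i<n} (-1)^i x_i . f(.., ^x_i, ..)
                   + (-1)^(n+1) f(x_0..x_{n-1}) . x_n
                   + sum_{i<j<=n} (-1)^(i+1) f(.., ^x_i, .., [x_i,x_j] (at j), ..) *)
Definition leib_d (F : fieldType) (V : vectType F) (M : vectType F)
  (br : V -> V -> V) (la : V -> M -> M) (ra : M -> V -> M) (n : nat)
  (f : {ffun 'I_n -> V} -> M) (x : {ffun 'I_n.+1 -> V}) : M :=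
  \sum_(i < n.+1 | (i < n)%N)
      (-1) ^+ i *: la (x i) (f [ffun k => x (lift i k)])
  + (-1) ^+ n.+1 *: ra (f [ffun k => x (lift ord_max k)]) (x ord_max)
  + \sum_(i < n.+1) \sum_(j < n.+1 | (i < j)%N)
      (-1) ^+ i.+1 *:
        f [ffun k => if lift i k == j then br (x i) (x j) else x (lift i k)].

(* HL^n(g, M) = 0 for n >= 1: every multilinear n-cocycle is the coboundary of a
   multilinear (n-1)-cochain.  Stated for n = k+1. *)
Definition HL_vanishes_pos (F : fieldType) (V : vectType F) (M : vectType F)
  (br : V -> V -> V) (la : V -> M -> M) (ra : M -> V -> M) (k : nat) :=
  forall f : {ffun 'I_k.+1 -> V} -> M, multilinear f ->
    (forall x, leib_d br la ra f x = 0) ->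
    exists g : {ffun 'I_k -> V} -> M, multilinear g /\
      forall x, leib_d br la ra g x = f x.

(* HL^0(g, M) = ker d^0 = 0 (C^{-1} = 0). *)
Definition HL0_vanishes (F : fieldType) (V : vectType F) (M : vectType F)
  (br : V -> V -> V) (la : V -> M -> M) (ra : M -> V -> M) :=
  forall f : {ffun 'I_0 -> V} -> M, multilinear f ->
    (forall x, leib_d br la ra f x = 0) -> forall x, f x = 0.

From HB Require Import structures.
From mathcomp Require Import all_boot all_order all_algebra.
From Stdlib Require Import Classical FunctionalExtensionality.
From mathcomp Require Import zify.

Set Implicit Arguments. Unset Strict Implicit. Unset Printing Implicit Defensive.
Import GRing.Theory.
Local Open Scope ring_scope.

(* By Cartan's formula [d i_a + i_a d = theta_a], the Lie derivative [theta_a f]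
   of a cocycle [f] is the coboundary [d (i_a f)].  Choose vectors [e_1, ..., e_N]
   adapted to the flag of ideals, so that [ad x] is triangular with diagonal
   weights [lambda_i x].  The values of a cocycle at the basis tuples [e_J] are
   killed one at a time, along an order on multi-indices refining [sum J].  On
   cochains vanishing below [J], [theta_x] acts on the value at [e_J] as
   [la x - L_J x] with [L_J = sum_l lambda_(J l)]; hence the values at [e_J] of
   such cocycles, and of such coboundaries, form [la]-stable subspaces of [M],
   which are [0] or [M] because an irreducible [M] is symmetric or has [ra = 0].
   If the coboundary values were [0], every [la x] would be the scalar [L_J x],
   forcing [dim M = 1]; so a coboundary matches the cocycle at [e_J].  In degree
   [0], a symmetric [M] makes [f x] span a sub-bimodule with trivial action. *)

Section LinearFunctions.
Variables (R : pzRingType) (U W X : lmodType R).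
Implicit Types (f g : U -> W).

Lemma linB f : linear f -> forall x y, f (x - y) = f x - f y.
Proof. by move=> h; apply: zmod_morphism_linear. Qed.

Lemma lin0 f : linear f -> f 0 = 0.
Proof. by move=> h; rewrite -(subrr 0) linB // subrr. Qed.

Lemma linN f : linear f -> forall x, f (- x) = - f x.
Proof. by move=> h x; rewrite -sub0r linB // lin0 // sub0r. Qed.

Lemma linD f : linear f -> forall x y, f (x + y) = f x + f y.
Proof. by move=> h; case: (GRing.semilinear_linear h). Qed.

Lemma linZ f : linear f -> forall a x, f (a *: x) = a *: f x.
Proof. by move=> h; apply: scalable_linear. Qed.

Lemma lin_sum f : linear f -> forall (I : Type) (r : seq I) (P : pred I) (G : I -> U),
  f (\sum_(i <- r | P i) G i) = \sum_(i <- r | P i) f (G i).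
Proof.
move=> h I r P G; elim/big_rec2: _ => [|i y1 y2 _ <-]; first exact: lin0.
by rewrite linD.
Qed.

Lemma lin_const0 : linear (fun _ : U => (0 : W)).
Proof. by move=> a u v; rewrite scaler0 addr0. Qed.

Lemma lin_comp (f : W -> X) (g : U -> W) :
  linear f -> linear g -> linear (fun v => f (g v)).
Proof. by move=> hf hg a u v /=; rewrite hg hf. Qed.

Lemma lin_sumf (I : Type) (r : seq I) (P : pred I) (G : I -> U -> W) :
  (forall i, linear (G i)) -> linear (fun v => \sum_(i <- r | P i) G i v).
Proof.
move=> h a u v /=; rewrite scaler_sumr -big_split /=; apply: eq_bigr => i _.
by rewrite h.
Qed.

End LinearFunctions.

Lemma lin_comb (R : comPzRingType) (U W : lmodType R) (f g : U -> W) c :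
  linear f -> linear g -> linear (fun v => c *: f v + g v).
Proof.
move=> hf hg a u v /=; rewrite hf hg !scalerDr !scalerA [c * a]mulrC.
by rewrite addrACA.
Qed.

Section Tuples.
Variable V : Type.

Definition tcons n (a : V) (y : {ffun 'I_n -> V}) : {ffun 'I_n.+1 -> V} :=
  [ffun k => if unlift ord0 k is Some k' then y k' else a].

Definition drop_at n (x : {ffun 'I_n.+1 -> V}) (i : 'I_n.+1) : {ffun 'I_n -> V} :=
  [ffun k => x (lift i k)].

Definition bracket_at n (b : V -> V -> V) (x : {ffun 'I_n.+1 -> V}) (i j : 'I_n.+1) :
  {ffun 'I_n -> V} := [ffun k => if lift i k == j then b (x i) (x j) else x (lift i k)].

Lemma tcons0 n a (y : {ffun 'I_n -> V}) : tcons a y ord0 = a.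
Proof. by rewrite ffunE unlift_none. Qed.

Lemma tconsS n a (y : {ffun 'I_n -> V}) k : tcons a y (lift ord0 k) = y k.
Proof. by rewrite ffunE liftK. Qed.

Lemma tcons_eta n (t : {ffun 'I_n.+1 -> V}) : t = tcons (t ord0) (drop_at t ord0).
Proof.
apply/ffunP=> k; case: (unliftP ord0 k) => [j ->|->]; first by rewrite tconsS ffunE.
by rewrite tcons0.
Qed.

Lemma tuple0_eq (u v : {ffun 'I_0 -> V}) : u = v.
Proof. by apply/ffunP=> [[]]. Qed.

Lemma updE n (y : {ffun 'I_n -> V}) j v l : upd y j v l = if l == j then v else y l.
Proof. by rewrite ffunE. Qed.

Lemma upd_eq n (y : {ffun 'I_n -> V}) j v : upd y j v j = v.
Proof. by rewrite updE eqxx. Qed.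

Lemma upd_id n (y : {ffun 'I_n -> V}) j : upd y j (y j) = y.
Proof. by apply/ffunP=> l; rewrite updE; case: eqP => [->|]. Qed.

Lemma upd_upd n (y : {ffun 'I_n -> V}) j u v : upd (upd y j u) j v = upd y j v.
Proof. by apply/ffunP=> l; rewrite !updE; case: eqP. Qed.

Lemma upd_comm n (y : {ffun 'I_n -> V}) j l u v : j != l ->
  upd (upd y j u) l v = upd (upd y l v) j u.
Proof.
move=> hjl; apply/ffunP=> k; rewrite !updE.
case: (eqVneq k l) => [->|]; first by rewrite eq_sym (negPf hjl).
by case: eqP.
Qed.

Lemma upd_tcons0 n a (y : {ffun 'I_n -> V}) v : upd (tcons a y) ord0 v = tcons v y.
Proof.
apply/ffunP=> k; rewrite updE; case: (unliftP ord0 k) => [j ->|->].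
  by rewrite eq_sym (negPf (neq_lift _ _)) !tconsS.
by rewrite eqxx tcons0.
Qed.

Lemma upd_tconsS n a (y : {ffun 'I_n -> V}) j v :
  upd (tcons a y) (lift ord0 j) v = tcons a (upd y j v).
Proof.
apply/ffunP=> k; rewrite updE; case: (unliftP ord0 k) => [i ->|->].
  by rewrite (inj_eq lift_inj) !tconsS updE.
by rewrite (negPf (neq_lift _ _)) !tcons0.
Qed.

Lemma lift_lift0 n (i : 'I_n.+1) (j : 'I_n) :
  lift (lift ord0 i) (lift ord0 j) = lift ord0 (lift i j) :> 'I_n.+2.
Proof. by apply: val_inj; rewrite /= /bump /= !add1n ltnS addnS. Qed.

Lemma ord_max_lift0 n : (ord_max : 'I_n.+2) = lift ord0 ord_max.
Proof. by apply: val_inj. Qed.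

Lemma lift_neq0_ord0 n (i : 'I_n.+2) : i != ord0 -> lift i ord0 = ord0.
Proof. by move=> hi; apply: val_inj; rewrite /= /bump leqNgt lt0n hi. Qed.

Lemma tcons_max n a (y : {ffun 'I_n.+1 -> V}) : tcons a y ord_max = y ord_max.
Proof. by rewrite ord_max_lift0 tconsS. Qed.

Lemma drop_at_tcons0 n a (y : {ffun 'I_n -> V}) : drop_at (tcons a y) ord0 = y.
Proof. by apply/ffunP=> k; rewrite ffunE tconsS. Qed.

Lemma drop_at_tconsS n a (y : {ffun 'I_n.+1 -> V}) i :
  drop_at (tcons a y) (lift ord0 i) = tcons a (drop_at y i).
Proof.
apply/ffunP=> k; rewrite ffunE; case: (unliftP ord0 k) => [j ->|->].
  by rewrite lift_lift0 !tconsS ffunE.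
by rewrite lift_neq0_ord0 ?neq_lift // !tcons0.
Qed.

Lemma drop_at_tcons_max n a (y : {ffun 'I_n.+1 -> V}) :
  drop_at (tcons a y) ord_max = tcons a (drop_at y ord_max).
Proof. by rewrite ord_max_lift0 drop_at_tconsS. Qed.

Lemma bracket_at_tcons0 n (b : V -> V -> V) a (y : {ffun 'I_n -> V}) j :
  bracket_at b (tcons a y) ord0 (lift ord0 j) = upd y j (b a (y j)).
Proof. by apply/ffunP=> k; rewrite ffunE (inj_eq lift_inj) tcons0 !tconsS updE. Qed.

Lemma bracket_at_tconsS n (b : V -> V -> V) a (y : {ffun 'I_n.+1 -> V}) i j :
  bracket_at b (tcons a y) (lift ord0 i) (lift ord0 j) = tcons a (bracket_at b y i j).
Proof.
apply/ffunP=> k; rewrite ffunE; case: (unliftP ord0 k) => [l ->|->].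
  by rewrite lift_lift0 (inj_eq lift_inj) !tconsS ffunE.
by rewrite lift_neq0_ord0 ?neq_lift // (negPf (neq_lift _ _)) !tcons0.
Qed.

End Tuples.

Lemma dimv_addline (F : fieldType) (W : vectType F) (U : {vspace W}) p :
  p \notin U -> (\dim U < \dim (U + <[p]>))%N.
Proof.
move=> hp; rewrite (ltn_leqif (dimv_leqif_sup (addvSl U <[p]>))).
apply: contra hp => /subvP; apply; exact: (subvP (addvSr U _)) _ (memv_line p).
Qed.

(* Adjoin missing vectors one at a time; the dimension bounds the number of steps. *)
Lemma lin_closed_vspace (F : fieldType) (W : vectType F) (P : W -> Prop) :
  P 0 -> (forall c u v, P u -> P v -> P (c *: u + v)) ->
  exists U : {vspace W}, forall m, P m <-> m \in U.
Proof.
move=> P0 Pc.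
have grow q : (exists U : {vspace W}, (forall u, u \in U -> P u) /\
                                      (forall m, P m -> m \in U)) \/
              (exists U : {vspace W}, (forall u, u \in U -> P u) /\ (q <= \dim U)%N).
  elim: q => [|q [done_U|[U [hU hq]]]].
  - by right; exists 0%VS; split=> // u; rewrite memv0 => /eqP ->.
  - by left.
  have [h|hn] := classic (forall m, P m -> m \in U); first by left; exists U.
  have [p hp] := not_all_ex_not _ _ hn.
  have [hpP hpU] := imply_to_and _ _ hp.
  right; exists (U + <[p]>)%VS; split.
    move=> u /memv_addP [u1 hu1 [u2 /vlineP [c ->] ->]].
    by rewrite addrC; apply: Pc => //; exact: hU.
  by apply: leq_ltn_trans hq (dimv_addline _); apply/negP.
case: (grow (\dim {: W}).+1) => [[U [h1 h2]]|[U [_ hq]]].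
  by exists U => m; split; [exact: h2 | exact: h1].
by have := dimvS (subvf U); rewrite leqNgt hq.
Qed.

Section LeibnizCochains.
Variables (F : fieldType) (V M : vectType F) (br : V -> V -> V)
  (la : V -> M -> M) (ra : M -> V -> M).

Local Notation d := (leib_d br la ra).
Local Notation cochain n := ({ffun 'I_n -> V} -> M).

Definition d_left n (f : cochain n) (x : {ffun 'I_n.+1 -> V}) :=
  \sum_(i < n.+1 | (i < n)%N) (-1) ^+ i *: la (x i) (f (drop_at x i)).

Definition d_right n (f : cochain n) (x : {ffun 'I_n.+1 -> V}) :=
  (-1) ^+ n.+1 *: ra (f (drop_at x ord_max)) (x ord_max).

Definition d_bracket n (f : cochain n) (x : {ffun 'I_n.+1 -> V}) :=
  \sum_(i < n.+1) \sum_(j < n.+1 | (i < j)%N) (-1) ^+ i.+1 *: f (bracket_at br x i j).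

Lemma leib_dE n (f : cochain n) x : d f x = d_left f x + d_right f x + d_bracket f x.
Proof. by []. Qed.

Definition contract n a (f : cochain n.+1) : cochain n := fun y => f (tcons a y).

Definition lie_der n a (f : cochain n) : cochain n :=
  fun y => la a (f y) - \sum_(j < n) f (upd y j (br a (y j))).

Lemma scale_signS (i : nat) (m : M) : (-1) ^+ i.+1 *: m = - ((-1) ^+ i *: m).
Proof. by rewrite exprS mulN1r scaleNr. Qed.

Lemma d_left_tcons n a (f : cochain n.+1) y :
  d_left f (tcons a y) = la a (f y) - d_left (contract a f) y.
Proof.
rewrite /d_left big_mkcond big_ord_recl /= tcons0 drop_at_tcons0 expr0 scale1r.
congr (_ + _); rewrite [in RHS]big_mkcond -sumrN; apply: eq_bigr => i _.
rewrite /bump /= add1n ltnS; case: ifP => _; last by rewrite oppr0.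
by rewrite tconsS drop_at_tconsS scale_signS.
Qed.

Lemma d_right_tcons n a (f : cochain n.+1) y :
  d_right f (tcons a y) = - d_right (contract a f) y.
Proof. by rewrite /d_right drop_at_tcons_max tcons_max scale_signS. Qed.

Lemma d_bracket_tcons n a (f : cochain n.+1) y :
  d_bracket f (tcons a y) =
    - \sum_(j < n.+1) f (upd y j (br a (y j))) - d_bracket (contract a f) y.
Proof.
rewrite /d_bracket big_ord_recl /=; congr (_ + _).
  rewrite big_mkcond big_ord_recl /= add0r -sumrN; apply: eq_bigr => j _.
  by rewrite bracket_at_tcons0 expr1 scaleN1r.
rewrite -sumrN; apply: eq_bigr => i _.
rewrite big_mkcond big_ord_recl /= add0r [in RHS]big_mkcond -sumrN.
apply: eq_bigr => j _; rewrite /bump /= !add1n ltnS; case: ifP => _; last by rewrite oppr0.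
by rewrite bracket_at_tconsS scale_signS.
Qed.

Lemma cartan_formula n a (f : cochain n.+1) y :
  d (contract a f) y + d f (tcons a y) = lie_der a f y.
Proof.
rewrite !leib_dE addrACA [d_left _ y + _ + _]addrACA.
rewrite d_left_tcons d_right_tcons d_bracket_tcons subrr addr0.
by rewrite [d_left _ y + _]addrC subrK [d_bracket _ y + _]addrC subrK.
Qed.

Lemma d_tcons n a (f : cochain n.+1) y :
  d f (tcons a y) = lie_der a f y - d (contract a f) y.
Proof. by rewrite -cartan_formula [d (contract a f) y + _]addrC addrK. Qed.

Lemma d_cochain0 (f : cochain 0) x t : d f x = - ra (f t) (x ord0).
Proof.
rewrite leib_dE.
have -> : d_left f x = 0 by apply: big_pred0 => i; rewrite ltn0.
have -> : d_bracket f x = 0.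
  by rewrite /d_bracket big_ord1; apply: big_pred0 => j; rewrite (ord1 j).
rewrite add0r addr0 /d_right expr1 scaleN1r (tuple0_eq (drop_at x ord_max) t).
by congr (- ra _ (x _)); apply: val_inj.
Qed.

Lemma lie_der_cochain0 a (f : cochain 0) y : lie_der a f y = la a (f y).
Proof. by rewrite /lie_der big_ord0 subr0. Qed.

Lemma contract_lie_der n x z (f : cochain n.+1) y :
  contract z (lie_der x f) y = lie_der x (contract z f) y - contract (br x z) f y.
Proof.
rewrite /contract /lie_der big_ord_recl /= upd_tcons0 tcons0.
under eq_bigr => j _ do rewrite upd_tconsS tconsS.
by rewrite opprD addrA addrAC.
Qed.

Hypothesis hla : forall x, linear (la x).
Hypothesis hlax : forall m, linear (la ^~ m).
Hypothesis hrax : forall x, linear (ra ^~ x).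
Hypothesis hbr : forall x, linear (br x).
Hypothesis hbrx : forall y, linear (br ^~ y).
Hypothesis hbr0 : forall x, br x x = 0.
Hypothesis hjac : forall x y z, br x (br y z) + br y (br z x) + br z (br x y) = 0.
Hypothesis hLLM : forall x y m, la (br x y) m = la x (la y m) - la y (la x m).
Hypothesis hLML : forall x y m, ra (la x m) y = la x (ra m y) - ra m (br x y).
Hypothesis hMLL : forall x y m, ra (ra m x) y = ra m (br x y) - la x (ra m y).

Lemma br_anti x y : br x y = - br y x.
Proof.
have := hbr0 (x + y); rewrite (linD (hbrx _)) !(linD (hbr _)) !hbr0 add0r addr0.
by move/eqP; rewrite addr_eq0 => /eqP.
Qed.

Lemma br_jacobi_sub x z w : br z (br x w) - br x (br z w) = - br (br x z) w.
Proof.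
have := hjac x z w; rewrite [br w x]br_anti (linN (hbr _)) [br w (br x z)]br_anti.
move/eqP; rewrite addrAC subr_eq0 => /eqP <-.
by rewrite addrAC subrr sub0r.
Qed.

Lemma d_comb n c (f g : cochain n) x :
  d (fun t => c *: f t + g t) x = c *: d f x + d g x.
Proof.
have eL : d_left (fun t => c *: f t + g t) x = c *: d_left f x + d_left g x.
  rewrite /d_left scaler_sumr -big_split; apply: eq_bigr => i _ /=.
  by rewrite (linD (hla _)) (linZ (hla _)) scalerDr !scalerA mulrC.
have eR : d_right (fun t => c *: f t + g t) x = c *: d_right f x + d_right g x.
  by rewrite /d_right (linD (hrax _)) (linZ (hrax _)) scalerDr !scalerA mulrC.
have eB : d_bracket (fun t => c *: f t + g t) x = c *: d_bracket f x + d_bracket g x.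
  rewrite /d_bracket scaler_sumr -big_split; apply: eq_bigr => i _ /=.
  rewrite scaler_sumr -big_split; apply: eq_bigr => j _ /=.
  by rewrite scalerDr !scalerA mulrC.
by rewrite !leib_dE eL eR eB !scalerDr [X in X + _ = _]addrACA [LHS]addrACA.
Qed.

Lemma d_sub n (f g : cochain n) x : d (fun t => f t - g t) x = d f x - d g x.
Proof.
have -> : (fun t => f t - g t) = (fun t => (-1) *: g t + f t).
  by apply: functional_extensionality => t; rewrite scaleN1r addrC.
by rewrite d_comb scaleN1r addrC.
Qed.

Lemma d_zero n x : d (fun _ : {ffun 'I_n -> V} => (0 : M)) x = 0.
Proof.
have -> : (fun _ : {ffun 'I_n -> V} => (0 : M)) = (fun t => 0 - 0) by rewrite subrr.
by rewrite d_sub subrr.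
Qed.

Lemma lie_der_comb n a c (f g : cochain n) y :
  lie_der a (fun t => c *: f t + g t) y = c *: lie_der a f y + lie_der a g y.
Proof.
rewrite /lie_der (linD (hla _)) (linZ (hla _)) big_split /= -scaler_sumr.
by rewrite opprD addrACA scalerBr.
Qed.

Lemma lie_der_sub n a (f g : cochain n) y :
  lie_der a (fun t => f t - g t) y = lie_der a f y - lie_der a g y.
Proof.
have -> : (fun t => f t - g t) = (fun t => (-1) *: g t + f t).
  by apply: functional_extensionality => t; rewrite scaleN1r addrC.
by rewrite lie_der_comb scaleN1r addrC.
Qed.

Section LieDerivativeCommutator.
Variables (n : nat) (f : cochain n) (y : {ffun 'I_n -> V}).
Hypothesis hf : multilinear f.

Let cross x z := \sum_(j < n) la z (f (upd y j (br x (y j)))).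
Let diag x z := \sum_(j < n) f (upd y j (br z (br x (y j)))).
Let offdiag x z := \sum_(j < n) \sum_(l < n | l != j)
   f (upd (upd y j (br x (y j))) l (br z (y l))).

Lemma lie_der_lie_derE x z :
  lie_der x (lie_der z f) y =
    la x (la z (f y)) - (cross z x + cross x z) + (diag x z + offdiag x z).
Proof.
rewrite [lie_der x _ y]/lie_der.
have -> : \sum_(j < n) lie_der z f (upd y j (br x (y j))) =
    cross x z - (diag x z + offdiag x z).
  under eq_bigr => j _ do rewrite /lie_der.
  rewrite sumrB /diag /offdiag -big_split /=; congr (_ - _); apply: eq_bigr => j _.
  rewrite (bigD1 j) //= upd_eq upd_upd; congr (_ + _).
  by apply: eq_bigr => l hl; rewrite updE (negPf hl).
rewrite [lie_der z f y]/lie_der (linB (hla _)) (lin_sum (hla _)) -/(cross z x).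
by rewrite opprB addrA addrAC opprD !addrA.
Qed.

Lemma offdiag_sym x z : offdiag x z = offdiag z x.
Proof.
rewrite /offdiag; under eq_bigr => j _ do rewrite big_mkcond /=.
rewrite exchange_big /=; apply: eq_bigr => j _; rewrite [RHS]big_mkcond /=.
apply: eq_bigr => l _; rewrite eq_sym; case: ifP => // hjl.
by rewrite upd_comm // hjl.
Qed.

Lemma lie_der_commutator x z :
  lie_der x (lie_der z f) y - lie_der z (lie_der x f) y = lie_der (br x z) f y.
Proof.
have cancel_common (a b c e k o : M) :
    (a - k + (b + o)) - (c - k + (e + o)) = (a - c) + (b - e).
  by rewrite addrACA [c - k + _]addrACA [c + e + _]addrC addrKA opprD addrACA.
rewrite !lie_der_lie_derE (offdiag_sym z x) [cross x z + _]addrC cancel_common -hLLM.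
congr (_ + _); rewrite /diag -sumrB -sumrN; apply: eq_bigr => j _.
by rewrite -(linB (hf _ _)) br_jacobi_sub (linN (hf _ _)).
Qed.

End LieDerivativeCommutator.

Lemma multilinear_comb n c (f g : cochain n) :
  multilinear f -> multilinear g -> multilinear (fun t => c *: f t + g t).
Proof. by move=> hf hg i x; apply: lin_comb; [apply: hf | apply: hg]. Qed.

Lemma multilinear_zero n : multilinear (fun _ : {ffun 'I_n -> V} => (0 : M)).
Proof. by move=> i x; apply: lin_const0. Qed.

Lemma multilinear_contract n a (f : cochain n.+1) :
  multilinear f -> multilinear (contract a f).
Proof.
move=> hf i x.
have -> : (fun v => contract a f (upd x i v)) =
          (fun v => f (upd (tcons a x) (lift ord0 i) v)).
  by apply: functional_extensionality => v; rewrite upd_tconsS.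
exact: hf.
Qed.

Lemma multilinear_lie_der n a (f : cochain n) :
  multilinear f -> multilinear (lie_der a f).
Proof.
move=> hf i x.
have -> : (fun v => lie_der a f (upd x i v)) = (fun v =>
   (-1) *: (\sum_(j < n) f (upd (upd x i v) j (br a (upd x i v j))))
   + la a (f (upd x i v))).
  by apply: functional_extensionality => v; rewrite scaleN1r addrC.
apply: lin_comb; last exact: lin_comp (hla a) (hf i x).
apply: lin_sumf => j; case: (eqVneq j i) => [->|hji].
  have -> : (fun v => f (upd (upd x i v) i (br a (upd x i v i)))) =
            (fun v => f (upd x i (br a v))).
    by apply: functional_extensionality => v; rewrite upd_upd upd_eq.
  exact: lin_comp (hf i x) (hbr a).
have -> : (fun v => f (upd (upd x i v) j (br a (upd x i v j)))) =
          (fun v => f (upd (upd x j (br a (x j))) i v)).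
  by apply: functional_extensionality => v; rewrite updE (negPf hji) upd_comm // eq_sym.
exact: hf.
Qed.

Lemma d_lie_der k (f : cochain k) : multilinear f ->
  forall x t, d (lie_der x f) t = lie_der x (d f) t.
Proof.
elim: k f => [|k IH] f hf x t.
  pose t0 : {ffun 'I_0 -> V} := [ffun => 0].
  rewrite (d_cochain0 _ _ t0) lie_der_cochain0 /lie_der big_ord1 !(d_cochain0 f _ t0).
  by rewrite upd_eq hLML (linN (hla _)) opprB opprK addrC.
rewrite (tcons_eta t); set z := t ord0; set y := drop_at t ord0.
rewrite d_tcons.
have -> : contract z (lie_der x f) = fun y => lie_der x (contract z f) y - contract (br x z) f y.
  by apply: functional_extensionality => u; rewrite contract_lie_der.
rewrite d_sub (IH _ (multilinear_contract z hf)) -/(contract z (lie_der x (d f)) y).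
rewrite contract_lie_der.
have rearrange (a b c e : M) : a - (b - c) = e - b - ((e - a) - c).
  rewrite [e - b]addrC -[e - a - c]addrA addrKA opprD !opprK opprB.
  by rewrite opprK addrCA [a + c]addrC.
have -> : contract z (d f) = fun y => lie_der z f y - d (contract z f) y.
  by apply: functional_extensionality => u; rewrite /contract d_tcons.
rewrite lie_der_sub /contract d_tcons -/(contract (br x z) f) -(lie_der_commutator y hf x z).
exact: rearrange.
Qed.

Lemma d_d k (f : cochain k) : multilinear f -> forall t, d (d f) t = 0.
Proof.
elim: k f => [|k IH] f hf t; rewrite (tcons_eta t); set z := t ord0; set y := drop_at t ord0.
  pose t0 : {ffun 'I_0 -> V} := [ffun => 0].
  rewrite d_tcons /lie_der big_ord1 (d_cochain0 (contract z (d f)) y t0) /contract.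
  rewrite (d_cochain0 f (tcons z t0) t0) tcons0 !(d_cochain0 f _ t0) upd_eq.
  by rewrite (linN (hla _)) (linN (hrax _)) opprK hMLL opprK [- _ + _]addrC subrr.
rewrite d_tcons.
have -> : contract z (d f) = fun y => lie_der z f y - d (contract z f) y.
  by apply: functional_extensionality => u; rewrite /contract d_tcons.
by rewrite d_sub d_lie_der // (IH _ (multilinear_contract z hf)) subr0 subrr.
Qed.

Definition cocycle n (f : cochain n) := multilinear f /\ forall x, d f x = 0.

Definition coboundary n (f : cochain n.+1) :=
  exists g : cochain n, multilinear g /\ forall x, d g x = f x.

Lemma cocycle_zero n : cocycle (fun _ : {ffun 'I_n -> V} => (0 : M)).
Proof. by split; [exact: multilinear_zero | exact: d_zero]. Qed.

Lemma coboundary_zero n : coboundary (fun _ : {ffun 'I_n.+1 -> V} => (0 : M)).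
Proof. by exists (fun _ => 0); split; [exact: multilinear_zero | exact: d_zero]. Qed.

Lemma cocycle_comb n c (f g : cochain n) :
  cocycle f -> cocycle g -> cocycle (fun t => c *: f t + g t).
Proof.
move=> [hf df] [hg dg]; split; first exact: multilinear_comb.
by move=> x; rewrite d_comb df dg scaler0 addr0.
Qed.

Lemma coboundary_comb n c (f g : cochain n.+1) :
  coboundary f -> coboundary g -> coboundary (fun t => c *: f t + g t).
Proof.
move=> [f' [hf df]] [g' [hg dg]]; exists (fun t => c *: f' t + g' t).
by split; [exact: multilinear_comb | move=> x; rewrite d_comb df dg].
Qed.

Lemma lie_der_cocycle n a (f : cochain n.+1) :
  cocycle f -> forall y, lie_der a f y = d (contract a f) y.
Proof. by move=> [hf df] y; rewrite -cartan_formula df addr0. Qed.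

Lemma cocycle_lie_der n a (f : cochain n.+1) : cocycle f -> cocycle (lie_der a f).
Proof.
move=> hZ; split; first exact: multilinear_lie_der hZ.1.
move=> x; have -> : lie_der a f = d (contract a f).
  by apply: functional_extensionality => y; rewrite lie_der_cocycle.
exact: d_d (multilinear_contract a hZ.1) x.
Qed.

Lemma coboundary_lie_der n a (f : cochain n.+1) : cocycle f -> coboundary (lie_der a f).
Proof.
move=> hZ; exists (contract a f); split; first exact: multilinear_contract hZ.1.
by move=> y; rewrite lie_der_cocycle.
Qed.

Section Irreducible.
Hypothesis hirr : irreducible_bimodule la ra.
Hypothesis hdim : (\dim {: M} != 1)%N.

Lemma right_action_symmetric_or_zero :
  (forall x m, ra m x = - la x m) \/ (forall x m, ra m x = 0).
Proof.
have [U hU] : exists U : {vspace M}, forall m, (forall y, ra m y = 0) <-> m \in U.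
  apply: lin_closed_vspace => [y|c u v hu hv y]; first exact: lin0 (hrax y).
  by rewrite (linD (hrax _)) (linZ (hrax _)) hu hv scaler0 addr0.
have subU : sub_bimodule la ra U.
  move=> x m /hU hm; apply/andP; split; apply/hU => y.
    by rewrite hLML !hm (lin0 (hla _)) subrr.
  by rewrite hMLL !hm (lin0 (hla _)) subrr.
case: (hirr.2 U subU) => [U0|Uf]; last first.
  by right=> x m; apply: (proj2 (hU m)); rewrite Uf memvf.
left=> x m; apply/eqP; rewrite -subr_eq0 opprK; apply/eqP.
have : ra m x + la x m \in U.
  by apply/hU => y; rewrite (linD (hrax _)) hMLL hLML -opprB addNr.
by rewrite U0 memv0 => /eqP.
Qed.

Lemma la_stable_zero_or_full (P : M -> Prop) :
  P 0 -> (forall c u v, P u -> P v -> P (c *: u + v)) ->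
  (forall x m, P m -> P (la x m)) -> (forall m, P m -> m = 0) \/ (forall m, P m).
Proof.
move=> P0 Pc Pl; have [U hU] := lin_closed_vspace P0 Pc.
have subU : sub_bimodule la ra U.
  move=> x m /hU hm; apply/andP; split; apply/hU; first exact: Pl.
  case: right_action_symmetric_or_zero => -> //.
  by rewrite -scaleN1r -[_ *: _]addr0; apply: Pc => //; exact: Pl.
case: (hirr.2 U subU) => [U0|Uf].
  by left=> m /hU; rewrite U0 memv0 => /eqP.
by right=> m; apply/hU; rewrite Uf memvf.
Qed.

Lemma left_action_not_scalar (L : V -> F) : ~ (forall x m, la x m = L x *: m).
Proof.
move=> hL.
have [m0 hm0] : exists m0 : M, m0 != 0.
  apply: NNPP => /not_ex_all_not h; apply/negP: hirr.1; apply/negPn.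
  rewrite dimv_eq0; apply/eqP/vspaceP => m; rewrite memv0 memvf.
  by case: eqP => // /eqP hm; case: (h m).
have sub_line : sub_bimodule la ra <[m0]>.
  move=> x m /vlineP [c ->]; apply/andP; split.
    by rewrite hL scalerA; apply/vlineP; exists (L x * c).
  case: right_action_symmetric_or_zero => ->; last exact: mem0v.
  by rewrite hL scalerA -scaleNr; apply/vlineP; exists (- (L x * c)).
case: (hirr.2 _ sub_line) => [U0|Uf].
  by move: (memv_line m0); rewrite U0 memv0 (negPf hm0).
by move: hdim; rewrite -Uf dim_vline hm0.
Qed.

Lemma symmetric_cocycle0_eq0 (hsym : symmetric_bimodule la ra) (f : cochain 0) :
  cocycle f -> forall x, f x = 0.
Proof.
move=> [hf df] x.
have hr y : ra (f x) y = 0.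
  by have /eqP := df [ffun => y]; rewrite (d_cochain0 _ _ x) ffunE oppr_eq0 => /eqP.
have sub_line : sub_bimodule la ra <[f x]>.
  move=> y m /vlineP [c ->]; rewrite (linZ (hla _)) (linZ (hrax _)).
  have hl : la y (f x) = 0 by rewrite -[la y (f x)]opprK -hsym hr oppr0.
  by rewrite hl hr !scaler0 mem0v.
case: (hirr.2 _ sub_line) => [U0|Uf].
  by move: (memv_line (f x)); rewrite U0 memv0 => /eqP.
by move: hdim; rewrite -Uf dim_vline; case: (f x =P 0).
Qed.

Section Flag.
Variables (N : nat) (G : nat -> {vspace V}).
Hypothesis hG0 : G 0 = 0%VS.
Hypothesis hGN : G N = fullv.
Hypothesis hGs : forall j, (j < N)%N ->
  (G j <= G j.+1)%VS /\ \dim (G j.+1) = (\dim (G j)).+1.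
Hypothesis hGi : forall j, (j <= N)%N -> lie_ideal br (G j).

Lemma exists_flag_vec j : exists v, (j < N)%N ==> (v \in G j.+1) && (v \notin G j).
Proof.
case: (ltnP j N) => hj; last by exists 0.
have [hs hd] := hGs hj; apply: NNPP => /not_ex_all_not h.
have : (G j.+1 <= G j)%VS.
  by apply/subvP => v hv; have := h v; rewrite hv /= => /negP; rewrite negbK.
by move/dimvS; rewrite hd ltnn.
Qed.

Definition flag_vec j := xchoose (exists_flag_vec j).

Lemma flag_vec_in j : (j < N)%N -> flag_vec j \in G j.+1.
Proof. by move=> hj; have /implyP/(_ hj)/andP[] := xchooseP (exists_flag_vec j). Qed.

Lemma flag_vec_notin j : (j < N)%N -> flag_vec j \notin G j.
Proof. by move=> hj; have /implyP/(_ hj)/andP[] := xchooseP (exists_flag_vec j). Qed.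

Lemma flag_step j : (j < N)%N -> G j.+1 = (G j + <[flag_vec j]>)%VS.
Proof.
move=> hj; have [hs hd] := hGs hj; apply/eqP; rewrite eq_sym eqEdim subv_add hs.
by rewrite -memvE flag_vec_in //= hd; apply: dimv_addline; apply: flag_vec_notin.
Qed.

Lemma linear_eq0_on_flag (W : vectType F) (phi : V -> W) : linear phi ->
  forall j, (j <= N)%N -> (forall i, (i < j)%N -> phi (flag_vec i) = 0) ->
  forall v, v \in G j -> phi v = 0.
Proof.
move=> hphi; elim=> [|j IH] hj h0 v.
  by rewrite hG0 memv0 => /eqP ->; exact: lin0.
rewrite flag_step // => /memv_addP [u hu [w /vlineP [c ->] ->]].
rewrite (linD hphi) (linZ hphi) h0 // scaler0 addr0.
by apply: IH => //; [exact: ltnW | move=> i hi; apply: h0; exact: ltnW].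
Qed.

Lemma exists_flag_weight i x :
  exists c : F, (i < N)%N ==> (br x (flag_vec i) - c *: flag_vec i \in G i).
Proof.
case: (ltnP i N) => hi; last by exists 0.
have : br x (flag_vec i) \in G i.+1 by apply: hGi => //; exact: flag_vec_in.
rewrite flag_step // => /memv_addP [u hu [w /vlineP [c ->] ->]].
by exists c; rewrite addrK.
Qed.

Definition flag_weight i x := xchoose (exists_flag_weight i x).

Lemma flag_weightP i x : (i < N)%N ->
  br x (flag_vec i) - flag_weight i x *: flag_vec i \in G i.
Proof. by move=> hi; have /implyP/(_ hi) := xchooseP (exists_flag_weight i x). Qed.

Section MultiIndices.
Variable m : nat.
Local Notation index := {ffun 'I_m -> 'I_N}.

Definition basis_tuple (J : index) : {ffun 'I_m -> V} := [ffun l => flag_vec (J l)].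

Definition index_sum (J : index) := (\sum_(l < m) (J l : nat))%N.

(* A well-order on multi-indices that refines [index_sum]; ties are broken by
   the position of [J] in the enumeration of the finite type of indices. *)
Definition index_rank (J : index) := (index_sum J * #|{: index}| + enum_rank J)%N.

Definition rank_bound := ((m * N).+1 * #|{: index}|)%N.

Lemma index_rank_inj : injective index_rank.
Proof.
move=> I J h; have : (index_rank I %% #|{: index}| = index_rank J %% #|{: index}|)%N.
  by rewrite h.
have hI : (enum_rank I < #|{: index}|)%N := ltn_ord _.
have hJ : (enum_rank J < #|{: index}|)%N := ltn_ord _.
rewrite /index_rank !modnMDl !modn_small // => hIJ.
by apply: enum_rank_inj; apply: val_inj.
Qed.

Lemma index_rank_upd_lt (J : index) l (j : 'I_N) :
  (j < J l)%N -> (index_rank (upd J l j) < index_rank J)%N.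
Proof.
move=> hj.
have hsum : (index_sum (upd J l j) < index_sum J)%N.
  rewrite /index_sum (bigD1 l) //= [X in (_ < X)%N](bigD1 l) //= upd_eq.
  rewrite (eq_bigr (fun i => (J i : nat))) => [|i hi]; first by rewrite ltn_add2r.
  by rewrite updE (negPf hi).
have : (enum_rank (upd J l j) < #|{: index}|)%N := ltn_ord _.
rewrite /index_rank; nia.
Qed.

Lemma index_rank_lt_bound (J : index) : (index_rank J < rank_bound)%N.
Proof.
have hsum : (index_sum J <= m * N)%N.
  rewrite /index_sum; apply: (@leq_trans (\sum_(l < m) N)).
    by apply: leq_sum => l _; exact: ltnW.
  by rewrite sum_nat_const card_ord.
have : (enum_rank J < #|{: index}|)%N := ltn_ord _.
rewrite /index_rank /rank_bound; nia.
Qed.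

Definition vanishes_below r (f : cochain m) :=
  forall J, (index_rank J < r)%N -> f (basis_tuple J) = 0.

Lemma vanishes_below_comb r c (f g : cochain m) :
  vanishes_below r f -> vanishes_below r g -> vanishes_below r (fun t => c *: f t + g t).
Proof. by move=> hf hg J hJ; rewrite hf // hg // scaler0 addr0. Qed.

Lemma upd_basis_tuple (J : index) l (i : 'I_N) :
  upd (basis_tuple J) l (flag_vec i) = basis_tuple (upd J l i).
Proof. by apply/ffunP=> l'; rewrite !ffunE; case: eqP. Qed.

(* Modulo [G (J l)], [br x] rescales [flag_vec (J l)]; the remainder is spanned
   by lower flag vectors and so only produces values at tuples of lower rank. *)
Lemma lie_der_basis_tuple (g : cochain m) (J : index) x : multilinear g ->
  (forall J', (index_rank J' < index_rank J)%N -> g (basis_tuple J') = 0) ->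
  lie_der x g (basis_tuple J) =
    la x (g (basis_tuple J)) - (\sum_(l < m) flag_weight (J l) x) *: g (basis_tuple J).
Proof.
move=> hg hJ; rewrite /lie_der scaler_suml; congr (_ - _); apply: eq_bigr => l _.
set t := basis_tuple J; have tl : t l = flag_vec (J l) by rewrite ffunE.
rewrite tl; set w := br x (flag_vec (J l)) - flag_weight (J l) x *: flag_vec (J l).
have -> : br x (flag_vec (J l)) = flag_weight (J l) x *: flag_vec (J l) + w.
  by rewrite addrC subrK.
rewrite (linD (hg l t)) (linZ (hg l t)) -tl upd_id.
rewrite (@linear_eq0_on_flag _ (fun v => g (upd t l v)) (hg l t) (J l)) ?addr0 //.
- exact: ltnW.
- move=> i hi; have hiN : (i < N)%N by apply: ltn_trans hi _.
  rewrite (_ : flag_vec i = flag_vec (Ordinal hiN)) // upd_basis_tuple.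
  by apply: hJ; exact: index_rank_upd_lt.
- exact: flag_weightP.
Qed.

Lemma vanishes_below_lie_der r (g : cochain m) x :
  multilinear g -> vanishes_below r g -> vanishes_below r (lie_der x g).
Proof.
move=> hg hY J hJ; rewrite lie_der_basis_tuple //; last first.
  by move=> J' hJ'; apply: hY; exact: ltn_trans hJ' hJ.
by rewrite hY // (lin0 (hla _)) scaler0 subr0.
Qed.

Lemma multilinear_eq0_on_basis (hN : (0 < N)%N) (f : cochain m) : multilinear f ->
  (forall J, f (basis_tuple J) = 0) -> forall t, f t = 0.
Proof.
move=> hf h0.
suff eq0_of_tail q (J : index) (t : {ffun 'I_m -> V}) :
    (forall l : 'I_m, (q <= l)%N -> t l = flag_vec (J l)) -> f t = 0.
  by move=> t; apply: (eq0_of_tail m [ffun => Ordinal hN]) => l; rewrite leqNgt ltn_ord.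
elim: q J t => [|q IH] J t ht.
  suff -> : t = basis_tuple J by [].
  by apply/ffunP=> l; rewrite ffunE ht.
case: (ltnP q m) => hq; last first.
  by apply: (IH J) => l hl; have := ltn_ord l; rewrite ltnNge (leq_trans hq hl).
pose l0 := Ordinal hq; rewrite -(upd_id t l0).
apply: (@linear_eq0_on_flag _ (fun v => f (upd t l0 v)) (hf l0 t) N) => //;
  last by rewrite hGN memvf.
move=> i hi; apply: (IH (upd J l0 (Ordinal hi))) => l hl.
rewrite !updE; case: eqP => // /eqP hll0; apply: ht.
by rewrite ltn_neqAle hl andbT; apply: contra hll0 => /eqP h; apply/eqP/val_inj.
Qed.

End MultiIndices.

Section ValuesAtBasisTuple.
Variables (k : nat) (J : {ffun 'I_k.+1 -> 'I_N}).
Local Notation r := (index_rank J).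
Local Notation eJ := (basis_tuple J).
Let L x := \sum_(l < k.+1) flag_weight (J l) x.

Lemma lie_der_at_eJ (g : cochain k.+1) x : multilinear g -> vanishes_below r g ->
  lie_der x g eJ = la x (g eJ) - L x *: g eJ.
Proof. by move=> hg hY; apply: lie_der_basis_tuple => // J' /hY. Qed.

(* Since [lie_der x] acts on the value at [eJ] as [la x - L x], the values at
   [eJ] of any class of cochains stable under [lie_der] form an [la]-stable subspace. *)
Lemma values_at_eJ_zero_or_full (C : cochain k.+1 -> Prop) :
  C (fun _ => 0) -> (forall c f g, C f -> C g -> C (fun t => c *: f t + g t)) ->
  (forall x g, C g -> C (lie_der x g)) -> (forall g, C g -> multilinear g) ->
  let P m := exists g, [/\ C g, vanishes_below r g & g eJ = m] in
  (forall m, P m -> m = 0) \/ (forall m, P m).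
Proof.
move=> C0 Cc Clie Cml P; apply: la_stable_zero_or_full.
- by exists (fun _ => 0).
- move=> c _ _ [f [Cf Yf <-]] [g [Cg Yg <-]]; exists (fun t => c *: f t + g t).
  by split; [exact: Cc | exact: vanishes_below_comb |].
- move=> x _ [g [Cg Yg <-]]; exists (fun t => L x *: g t + lie_der x g t); split.
  + by apply: Cc => //; exact: Clie.
  + by apply: vanishes_below_comb => //; exact: vanishes_below_lie_der (Cml _ Cg) Yg.
  + by rewrite /= (lie_der_at_eJ _ (Cml _ Cg) Yg) addrC subrK.
Qed.

Lemma coboundary_matching_at_eJ (f : cochain k.+1) : cocycle f -> vanishes_below r f ->
  exists g, [/\ cocycle g, coboundary g, vanishes_below r g & g eJ = f eJ].
Proof.
move=> hZ hY.
have [Pz|Pall] := @values_at_eJ_zero_or_full (@cocycle k.+1) (cocycle_zero _)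
  (@cocycle_comb k.+1) (@cocycle_lie_der k) (fun g Zg => Zg.1).
  exists (fun _ => 0); split; [exact: cocycle_zero | exact: coboundary_zero | by [] |].
  by rewrite (Pz (f eJ)) //; exists f.
pose C (g : cochain k.+1) := cocycle g /\ coboundary g.
have [Qz|Qall] := @values_at_eJ_zero_or_full C (conj (cocycle_zero _) (coboundary_zero _))
  (fun c f g Cf Cg => conj (cocycle_comb c Cf.1 Cg.1) (coboundary_comb c Cf.2 Cg.2))
  (fun x g Cg => conj (cocycle_lie_der x Cg.1) (coboundary_lie_der x Cg.1))
  (fun g Cg => Cg.1.1).
  exfalso; apply: (@left_action_not_scalar L) => x m.
  have [g [Zg Yg <-]] := Pall m; apply/eqP; rewrite -subr_eq0 -(lie_der_at_eJ _ Zg.1 Yg).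
  apply/eqP/Qz; exists (lie_der x g); split; last by [].
  + by split; [exact: cocycle_lie_der | exact: coboundary_lie_der].
  + exact: vanishes_below_lie_der Zg.1 Yg.
by have [g [[Zg Bg] Yg gJ]] := Qall (f eJ); exists g.
Qed.

End ValuesAtBasisTuple.

Lemma cocycle_vanishing_below_coboundary (hN : (0 < N)%N) k r (f : cochain k.+1) :
  cocycle f -> vanishes_below r f -> coboundary f.
Proof.
have [s le_s] := ubnP (rank_bound k.+1 - r); elim: s r f le_s => // s IH r f le_s hZ hY.
case: (leqP (rank_bound k.+1) r) => hr.
  have f0 : f = fun _ => 0.
    apply: functional_extensionality; apply: multilinear_eq0_on_basis hZ.1 _ => //.
    by move=> J; apply: hY; exact: leq_trans (index_rank_lt_bound J) hr.
  by rewrite f0; exact: coboundary_zero.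
have [J /eqP rJ|no_J] := pickP [pred J : {ffun 'I_k.+1 -> 'I_N} | index_rank J == r].
  subst r.
  have [g [Zg Bg Yg gJ]] := coboundary_matching_at_eJ hZ hY.
  pose h t := (-1) *: g t + f t.
  have -> : f = fun t => 1 *: h t + g t.
    by apply: functional_extensionality => t; rewrite /h scale1r scaleN1r addrAC addNr add0r.
  apply: coboundary_comb Bg; apply: (IH (index_rank J).+1); first lia.
    exact: cocycle_comb.
  move=> J'; rewrite ltnS leq_eqVlt /h => /orP [/eqP /index_rank_inj ->|hJ'].
    by rewrite gJ scaleN1r addNr.
  by rewrite Yg // hY // scaler0 addr0.
apply: (IH r.+1); [lia | exact: hZ |] => J; rewrite ltnS leq_eqVlt => /orP [/eqP rJ|].
  by have := no_J J; rewrite /= rJ eqxx.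
exact: hY.
Qed.

Lemma flag_HL_vanishes_pos k : HL_vanishes_pos br la ra k.
Proof.
move=> f hf df.
have hN : (0 < N)%N.
  rewrite lt0n; apply/negP => /eqP N0; apply: (@left_action_not_scalar (fun _ => 0)) => x m.
  have : x \in G N by rewrite hGN memvf.
  by rewrite N0 hG0 memv0 => /eqP ->; rewrite (lin0 (hlax _)) scale0r.
exact: (@cocycle_vanishing_below_coboundary hN k 0).
Qed.

End Flag.
End Irreducible.
End LeibnizCochains.

Unset Implicit Arguments.

Theorem proposition2p7 (F : fieldType) (V : vectType F) (M : vectType F)
  (br : V -> V -> V) (la : V -> M -> M) (ra : M -> V -> M) :
  is_lie_bracket br -> supersolvable br ->
  is_leibniz_bimodule br la ra -> irreducible_bimodule la ra ->
  (\dim {: M} != 1)%N ->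
  (forall k : nat, HL_vanishes_pos br la ra k) /\
  (symmetric_bimodule la ra -> HL0_vanishes br la ra).
Proof.
move=> [hbr hbrx hbr0 hjac] [N [G [hG0 hGN hGs hGi]]]
  [[hla hlax] [_ hrax] hLLM hLML hMLL] hirr hdim.
split=> [k | hsym f hf df].
  exact: (flag_HL_vanishes_pos hla hlax hrax hbr hbrx hbr0 hjac hLLM hLML hMLL
            hirr hdim hG0 hGN hGs hGi).
exact: (symmetric_cocycle0_eq0 hla hrax hirr hdim hsym (conj hf df)).
Qed.
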